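(* Let $A\in\mathcal R$ and $F\in\mathcal S(A)$. Then (1) if $x\notin\mathcal A(A)$ then $I_F(x)>0$; (2) if $x\notin\mathcal A(A)$ and $T(x)\in\mathcal A(A)$ then $R_F(x)>0$.
   Context: $\Sigma=\{1,\dots,d\}^{\mathbb N}$, $T$ the left shift, metric $d(\omega,\nu)=\lambda^N$, $N=\min\{k:\omega_k\ne\nu_k\}$, $0<\lambda<1$. $m_A=\max\{\int A\,d\mu:\mu\ T\text{-invariant}\}$; $\mathcal M(A)$ the set of invariant probabilities attaining $m_A$. $\mathcal S(A)$ is the set of $\alpha$-Hölder calibrated sub-actions $F$, i.e. $F(x)=\max_{Ty=x}[F(y)+A(y)-m_A]$. $R_F(x)=F(Tx)-F(x)-A(x)+m_A\ge0$, $I_F(x)=\sum_{i\ge0}R_F(T^ix)$. $S_A(x,y)=\lim_{\epsilon\to0}\sup\{\sum_{i=0}^{n-1}[A(T^iz)-m_A]:n\in\mathbb N,\ T^nz=y,\ d(z,x)<\epsilon\}$; $\mathcal A(A)=\{x:S_A(x,x)=0\}$. $\mathcal R=\{A\in C^\alpha(\Sigma,\mathbb R):\mathcal M(A)=\{\mu\},\ \mathcal A(A)=\operatorname{supp}\mu\}$. *)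

From Stdlib Require Import Reals Lra Lia ClassicalEpsilon FunctionalExtensionality.
From Stdlib Require Fin.
Open Scope R_scope.

Definition Sigma (d : nat) : Type := nat -> Fin.t d.

Definition shift {d : nat} (w : Sigma d) : Sigma d := fun k => w (S k).

Fixpoint iterT {d : nat} (n : nat) (w : Sigma d) : Sigma d :=
  match n with O => w | S n' => iterT n' (shift w) end.

(* d(w,v) = lam^N, N = min{k : w_k <> v_k};  d(w,w) = 0 *)
Definition dist {d : nat} (lam : R) (w v : Sigma d) : R :=
  epsilon (inhabits 0) (fun r =>
    (w = v /\ r = 0) \/
    exists n : nat, (forall k, (k < n)%nat -> w k = v k) /\ w n <> v n /\ r = lam ^ n).

Definition hoelder {d : nat} (lam alpha : R) (f : Sigma d -> R) : Prop :=
  exists C : R, forall x y : Sigma d, x <> y ->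
    Rabs (f x - f y) <= C * Rpower (dist lam x y) alpha.

Definition continuous_S {d : nat} (lam : R) (f : Sigma d -> R) : Prop :=
  forall x eps, 0 < eps -> exists delta, 0 < delta /\
    forall y, dist lam x y < delta -> Rabs (f y - f x) < eps.

(* Borel probability measures on the compact space Sigma, represented (Riesz)
   as positive normalised linear functionals on C(Sigma); mu f = \int f dmu. *)
Definition prob_measure {d : nat} (lam : R) (mu : (Sigma d -> R) -> R) : Prop :=
  (forall f g, continuous_S lam f -> continuous_S lam g ->
      mu (fun x => f x + g x) = mu f + mu g) /\
  (forall c f, continuous_S lam f -> mu (fun x => c * f x) = c * mu f) /\
  (forall f, continuous_S lam f -> (forall x, 0 <= f x) -> 0 <= mu f) /\
  mu (fun _ => 1) = 1.

Definition invariant {d : nat} (lam : R) (mu : (Sigma d -> R) -> R) : Prop :=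
  forall f, continuous_S lam f -> mu (fun x => f (shift x)) = mu f.

Definition inv_prob {d : nat} (lam : R) (mu : (Sigma d -> R) -> R) : Prop :=
  prob_measure lam mu /\ invariant lam mu.

(* two functionals represent the same measure iff they agree on C(Sigma) *)
Definition same_measure {d : nat} (lam : R) (mu nu : (Sigma d -> R) -> R) : Prop :=
  forall f, continuous_S lam f -> mu f = nu f.

Definition mA {d : nat} (lam : R) (A : Sigma d -> R) : R :=
  epsilon (inhabits 0) (fun m =>
    (exists mu, inv_prob lam mu /\ mu A = m) /\
    (forall nu, inv_prob lam nu -> nu A <= m)).

Definition maximizing {d : nat} (lam : R) (A : Sigma d -> R) (mu : (Sigma d -> R) -> R) : Prop :=
  inv_prob lam mu /\ mu A = mA lam A.

Definition ball_ind {d : nat} (lam : R) (x : Sigma d) (eps : R) : Sigma d -> R :=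
  fun y => if Rlt_dec (dist lam x y) eps then 1 else 0.

Definition in_supp {d : nat} (lam : R) (mu : (Sigma d -> R) -> R) (x : Sigma d) : Prop :=
  forall eps, 0 < eps -> 0 < mu (ball_ind lam x eps).

Definition S_set {d : nat} (lam : R) (A : Sigma d -> R) (x y : Sigma d) (eps : R) (v : R) : Prop :=
  exists (k : nat) (z : Sigma d),
    iterT (S k) z = y /\ dist lam z x < eps /\
    v = sum_f_R0 (fun i => A (iterT i z) - mA lam A) k.

(* "S_A(x,y) = s": lim_{eps -> 0} sup S_set(eps) = s *)
Definition S_A_eq {d : nat} (lam : R) (A : Sigma d -> R) (x y : Sigma d) (s : R) : Prop :=
  forall eta, 0 < eta -> exists eps0, 0 < eps0 /\
    forall eps, 0 < eps < eps0 ->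
      (forall v, S_set lam A x y eps v -> v <= s + eta) /\
      (exists v, S_set lam A x y eps v /\ s - eta < v).

Definition aubry {d : nat} (lam : R) (A : Sigma d -> R) (x : Sigma d) : Prop :=
  S_A_eq lam A x x 0.

Definition in_R {d : nat} (lam alpha : R) (A : Sigma d -> R) : Prop :=
  hoelder lam alpha A /\
  exists mu, maximizing lam A mu /\
    (forall nu, maximizing lam A nu -> same_measure lam nu mu) /\
    (forall x, aubry lam A x <-> in_supp lam mu x).

Definition calibrated {d : nat} (lam alpha : R) (A F : Sigma d -> R) : Prop :=
  hoelder lam alpha F /\
  forall x : Sigma d,
    (forall y, shift y = x -> F y + A y - mA lam A <= F x) /\
    (exists y, shift y = x /\ F y + A y - mA lam A = F x).

Definition R_F {d : nat} (lam : R) (A F : Sigma d -> R) (x : Sigma d) : R :=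
  F (shift x) - F x - A x + mA lam A.

(* I_F(x) = sum_{i>=0} R_F(T^i x) in [0,+oo] (nonnegative terms);
   I_F(x) > 0 means the supremum of the partial sums is > 0 *)
Definition I_F_pos {d : nat} (lam : R) (A F : Sigma d -> R) (x : Sigma d) : Prop :=
  exists N : nat, 0 < sum_f_R0 (fun i => R_F lam A F (iterT i x)) N.

(* Since [F] is calibrated, [R_F >= 0], and along an orbit segment from [z] to
   [T^L z] the ergodic sum of [A - m_A] equals [F (T^L z) - F z] minus the sum of
   [R_F]. Hence [y] is in the Aubry set as soon as there are orbit segments from
   near [y] back to near [y] along which [R_F] sums to arbitrarily little.
   Calibration gives every [x] a backward orbit on which [R_F] vanishes; its
   cluster points are Aubry points leading to [x] at zero cost. If [I_F(x) = 0],
   or if [R_F(x) = 0] and [T x] is an Aubry point, the forward orbit of [x] leads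
   at zero cost to an Aubry point. Finally two Aubry points are linked at
   arbitrarily small cost: the Aubry set is the support of the unique maximizing
   measure [mu], [mu(R_F) = 0], and restricting [mu] to the points that later
   visit a neighbourhood of the second point gives, after normalisation, a
   maximizing measure, hence [mu] itself, which charges every neighbourhood of
   the first point. Closing the loop shows that [x] is an Aubry point. *)

From Pilot Require Import Defs.
From Stdlib Require Import Reals Lra Lia ClassicalEpsilon FunctionalExtensionality Classical.
From Stdlib Require Fin.
Open Scope R_scope.

Definition agree {d : nat} (a b : Sigma d) (n : nat) : Prop :=
  forall i, (i < n)%nat -> a i = b i.

Section Agree.
Context {d : nat}.
Implicit Types a b c w : Sigma d.

Lemma agree_le a b m n : (m <= n)%nat -> agree a b n -> agree a b m.
Proof. intros Hmn H i Hi. apply H. lia. Qed.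

Lemma agree_sym a b n : agree a b n -> agree b a n.
Proof. intros H i Hi. symmetry; auto. Qed.

Lemma agree_trans a b c n : agree a b n -> agree b c n -> agree a c n.
Proof. intros H1 H2 i Hi. rewrite H1; auto. Qed.

Lemma agree_refl a n : agree a a n.
Proof. intros i _; reflexivity. Qed.

Lemma agree0 a b : agree a b 0.
Proof. intros i Hi; lia. Qed.

Lemma agree_shift a b n : agree a b (S n) -> agree (shift a) (shift b) n.
Proof. intros H k Hk. apply H. lia. Qed.

Lemma iterT_apply n w k : iterT n w k = w (n + k)%nat.
Proof. revert w; induction n; intros w; simpl; auto. Qed.

Lemma iterT_add m n w : iterT m (iterT n w) = iterT (m + n) w.
Proof. apply functional_extensionality; intro k. rewrite !iterT_apply. f_equal; lia. Qed.

Lemma iterT_Sr n w : iterT (S n) w = shift (iterT n w).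
Proof. apply functional_extensionality; intro k. unfold shift. rewrite !iterT_apply. f_equal; lia. Qed.

Lemma first_difference a b : a <> b -> exists k, agree a b k /\ a k <> b k.
Proof.
  intros Hab.
  assert (Hex : exists i, a i <> b i).
  { apply NNPP; intro Hn. apply Hab, functional_extensionality. intro i.
    apply NNPP; intro Hi. eauto. }
  destruct Hex as [i Hi].
  induction i as [i IH] using (well_founded_induction Wf_nat.lt_wf).
  destruct (classic (agree a b i)) as [Ha | Ha]; [now exists i |].
  apply NNPP; intro Hn. apply Ha. intros j Hj. apply NNPP; intro Hj'.
  exact (Hn (IH j Hj Hj')).
Qed.

End Agree.

Section Powers.
Variable q : R.
Hypothesis Hq : 0 < q < 1.

Lemma pow_pos_le1 n : 0 < q ^ n <= 1.
Proof. induction n; simpl; [lra | split; nra]. Qed.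

Lemma pow_le_antimono m n : (m <= n)%nat -> q ^ n <= q ^ m.
Proof.
  intros Hmn. replace n with (m + (n - m))%nat by lia. rewrite pow_add.
  pose proof (pow_pos_le1 (n - m)). pose proof (pow_pos_le1 m). nra.
Qed.

Lemma pow_S_lt n : q ^ S n < q ^ n.
Proof. pose proof (pow_pos_le1 n). simpl. nra. Qed.

Lemma scaled_pow_lt_eventually K e : 0 <= K -> 0 < e ->
  exists N, forall n, (n >= N)%nat -> K * q ^ n < e.
Proof.
  intros HK He.
  assert (Ha : Rabs q < 1) by (rewrite Rabs_pos_eq; lra).
  destruct (pow_lt_1_zero q Ha (e / (K + 1))) as [N HN]; [apply Rdiv_lt_0_compat; lra |].
  exists N. intros n Hn. specialize (HN n Hn). pose proof (pow_pos_le1 n).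
  rewrite Rabs_pos_eq in HN by lra.
  apply Rmult_lt_compat_l with (r := K + 1) in HN; [| lra].
  replace ((K + 1) * (e / (K + 1))) with e in HN by (field; lra). nra.
Qed.

Lemma pow_lt_eventually e : 0 < e -> exists N, forall n, (n >= N)%nat -> q ^ n < e.
Proof.
  intros He. destruct (scaled_pow_lt_eventually 1 e) as [N HN]; [lra | exact He |].
  exists N. intros n Hn. specialize (HN n Hn). lra.
Qed.

End Powers.

Section Distance.
Context {d : nat}.
Variable lam : R.
Implicit Types a b : Sigma d.

Lemma dist_spec a b :
  (a = b /\ Defs.dist lam a b = 0) \/
  (exists k, agree a b k /\ a k <> b k /\ Defs.dist lam a b = lam ^ k).
Proof.
  unfold Defs.dist.
  match goal with |- context [epsilon ?i ?P] => assert (HP : P (epsilon i P)) end.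
  { apply epsilon_spec. destruct (classic (a = b)) as [E | E].
    - exists 0; left; auto.
    - destruct (first_difference a b E) as [k [H1 H2]]. exists (lam ^ k). right. now exists k. }
  destruct HP as [HP | [n HP]]; [left | right; exists n]; tauto.
Qed.

Lemma agree_diff_le a b n k : agree a b n -> a k <> b k -> (n <= k)%nat.
Proof. intros H1 H2. destruct (Nat.lt_ge_cases k n); auto. exfalso; apply H2, H1; auto. Qed.

Lemma dist_neq_agree a b n : a <> b -> agree a b n ->
  exists k, (n <= k)%nat /\ Defs.dist lam a b = lam ^ k.
Proof.
  intros Hne H. destruct (dist_spec a b) as [[E _] | [k [Ha [Hk E]]]]; [contradiction |].
  exists k; split; auto. eapply agree_diff_le; eauto.
Qed.

Hypothesis Hlam : 0 < lam < 1.

Lemma dist_agree_le a b n : agree a b n -> Defs.dist lam a b <= lam ^ n.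
Proof.
  intros H. destruct (dist_spec a b) as [[_ E] | [k [_ [Hk E]]]]; rewrite E.
  - pose proof (pow_pos_le1 lam Hlam n); lra.
  - apply pow_le_antimono; auto. eapply agree_diff_le; eauto.
Qed.

Lemma agree_dist_lt a b n : agree a b (S n) -> Defs.dist lam a b < lam ^ n.
Proof. intros H. pose proof (dist_agree_le a b (S n) H). pose proof (pow_S_lt lam Hlam n). lra. Qed.

Lemma dist_lt_agree a b n : Defs.dist lam a b < lam ^ n -> agree a b (S n).
Proof.
  intros H. destruct (dist_spec a b) as [[E _] | [k [Ha [Hk E]]]].
  - subst; apply agree_refl.
  - rewrite E in H. apply agree_le with k; auto.
    destruct (Nat.lt_ge_cases n k) as [Hnk | Hkn]; [lia |].
    pose proof (pow_le_antimono lam Hlam k n Hkn). lra.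
Qed.

End Distance.

Definition hoelder_ratio (lam alpha : R) : R := Rpower lam alpha.

Section Hoelder.
Context {d : nat}.
Variables lam alpha : R.
Hypotheses (Hlam : 0 < lam < 1) (Halpha : 0 < alpha).
Let q := hoelder_ratio lam alpha.

Lemma hoelder_ratio_in01 : 0 < q < 1.
Proof.
  unfold q, hoelder_ratio. split; [apply exp_pos |].
  replace 1 with (Rpower 1 alpha) by (unfold Rpower; rewrite ln_1, Rmult_0_r, exp_0; reflexivity).
  apply Rlt_Rpower_l; lra.
Qed.

Lemma Rpower_pow_hoelder k : Rpower (lam ^ k) alpha = q ^ k.
Proof.
  rewrite <- Rpower_pow by lra. rewrite Rpower_mult. unfold q, hoelder_ratio.
  rewrite <- Rpower_pow by (unfold Rpower; apply exp_pos). rewrite Rpower_mult.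
  f_equal; ring.
Qed.

Lemma hoelder_agree_bound (f : Sigma d -> R) : hoelder lam alpha f ->
  exists K, 0 <= K /\ forall a b n, agree a b n -> Rabs (f a - f b) <= K * q ^ n.
Proof.
  intros [C HC]. exists (Rabs C). split; [apply Rabs_pos |].
  pose proof hoelder_ratio_in01 as Hq.
  intros a b n H. destruct (classic (a = b)) as [E | E].
  - subst. rewrite Rminus_diag, Rabs_R0.
    apply Rmult_le_pos; [apply Rabs_pos | apply pow_le; lra].
  - destruct (dist_neq_agree lam a b n E H) as [k [Hk Hd]].
    specialize (HC a b E). rewrite Hd, Rpower_pow_hoelder in HC.
    pose proof (pow_le_antimono q Hq n k Hk). pose proof (pow_pos_le1 q Hq k).
    pose proof (Rabs_pos C). pose proof (Rle_abs C). nra.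
Qed.

End Hoelder.

Definition inf_often (P : nat -> Prop) : Prop := forall K, exists k, (K <= k)%nat /\ P k.

Lemma fin_uniform_bound (d : nat) (Q : Fin.t d -> nat -> Prop) :
  (forall a K K', (K <= K')%nat -> Q a K -> Q a K') ->
  (forall a, exists K, Q a K) -> exists K, forall a, Q a K.
Proof.
  revert Q. induction d as [| d IH]; intros Q Hmono Hex.
  - exists 0%nat. intros a. exact (Fin.case0 (fun a => Q a 0%nat) a).
  - destruct (IH (fun a K => Q (Fin.FS a) K)) as [K1 HK1].
    + intros a K K' H1 H2. eapply Hmono; eauto.
    + intros a. apply Hex.
    + destruct (Hex Fin.F1) as [K0 HK0].
      exists (Nat.max K0 K1). intros a.
      apply (Fin.caseS' a (fun a => Q a (Nat.max K0 K1))).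
      * eapply Hmono; [| exact HK0]. lia.
      * intros p. eapply Hmono; [| exact (HK1 p)]. lia.
Qed.

Lemma inf_often_pigeonhole {d : nat} (P : nat -> Prop) (f : nat -> Fin.t d) :
  inf_often P -> exists a, inf_often (fun k => P k /\ f k = a).
Proof.
  intros HP. apply NNPP; intros Hn.
  assert (H : forall a, exists K, forall k, (K <= k)%nat -> ~ (P k /\ f k = a)).
  { intros a. apply NNPP; intros Ha. apply Hn. exists a. intros K.
    apply NNPP; intros HK. apply Ha. exists K. intros k Hk Hk2. apply HK. now exists k. }
  destruct (fin_uniform_bound d (fun a K => forall k, (K <= k)%nat -> ~ (P k /\ f k = a)))
    as [K HK]; [intros a K K' H1 H2 k Hk; apply H2; lia | exact H |].
  destruct (HP K) as [k [Hk Pk]]. exact (HK (f k) k Hk (conj Pk eq_refl)).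
Qed.

Section Compactness.
Context {d : nat}.
Variable s : nat -> Sigma d.

Definition frequent (w : Sigma d) (n : nat) : Prop := inf_often (fun k => agree (s k) w n).

Definition cluster_point (y : Sigma d) : Prop := forall n, frequent y n.

Lemma frequent_refine w n : frequent w n -> exists w', agree w' w n /\ frequent w' (S n).
Proof.
  intros H. destruct (inf_often_pigeonhole _ (fun k => s k n) H) as [a Ha].
  exists (fun i => if Nat.eqb i n then a else w i). split.
  - intros i Hi. destruct (Nat.eqb_spec i n); [lia | auto].
  - intros K. destruct (Ha K) as [k [Hk [H1 H2]]]. exists k; split; auto.
    intros i Hi. destruct (Nat.eqb_spec i n); [now subst | apply H1; lia].
Qed.

(* Koenig's lemma: a branch of the tree of frequently visited cylinders. *)
Lemma exists_cluster_point : exists y, cluster_point y.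
Proof.
  set (refine := fun (w : Sigma d) (n : nat) =>
     epsilon (inhabits w) (fun w' => frequent w n -> agree w' w n /\ frequent w' (S n))).
  assert (Hrefine : forall w n, frequent w n ->
            agree (refine w n) w n /\ frequent (refine w n) (S n)).
  { intros w n. unfold refine. apply epsilon_spec.
    destruct (classic (frequent w n)) as [H | H].
    - destruct (frequent_refine w n H) as [w' Hw']. exists w'; auto.
    - exists w. intro; contradiction. }
  set (g := fix g (n : nat) : Sigma d := match n with O => s O | S m => refine (g m) m end).
  assert (Hg : forall n, frequent (g n) n).
  { induction n as [| n IH].
    - intros K. exists K; split; auto. apply agree0.
    - apply Hrefine, IH. }
  assert (Hcoh : forall j n, agree (g (j + n)%nat) (g n) n).
  { induction j as [| j IH]; intros n; [apply agree_refl |].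
    eapply agree_trans; [| apply IH].
    apply agree_le with (j + n)%nat; [lia | apply Hrefine, Hg]. }
  exists (fun i => g (S i) i). intros n.
  assert (Ha : agree (fun i => g (S i) i) (g n) n).
  { intros i Hi. specialize (Hcoh (n - S i)%nat (S i)).
    replace (n - S i + S i)%nat with n in Hcoh by lia. symmetry. apply Hcoh. lia. }
  intros K. destruct (Hg n K) as [k [Hk Hk2]]. exists k; split; auto.
  eapply agree_trans; [exact Hk2 | apply agree_sym, Ha].
Qed.

End Compactness.

Definition depends_on {d : nat} (f : Sigma d -> R) (L : nat) : Prop :=
  forall a b, agree a b L -> f a = f b.

Lemma depends_on_le {d : nat} (f : Sigma d -> R) L L' :
  (L <= L')%nat -> depends_on f L -> depends_on f L'.
Proof. intros H Hf a b Hab. apply Hf, agree_le with L'; auto. Qed.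

Lemma depends_on_mult {d : nat} (f g : Sigma d -> R) L :
  depends_on f L -> depends_on g L -> depends_on (fun w => f w * g w) L.
Proof. intros Hf Hg a b H. now rewrite (Hf a b H), (Hg a b H). Qed.

Section Continuity.
Context {d : nat}.
Variable lam : R.
Hypothesis Hlam : 0 < lam < 1.
Implicit Types f g : Sigma d -> R.

Lemma continuous_S_of_agree_bound f q K : 0 < q < 1 -> 0 <= K ->
  (forall a b n, agree a b n -> Rabs (f a - f b) <= K * q ^ n) -> continuous_S lam f.
Proof.
  intros Hq HK H x eps He.
  destruct (scaled_pow_lt_eventually q Hq K eps HK He) as [N HN].
  exists (lam ^ N). split; [apply pow_lt; lra |].
  intros y Hy. apply (dist_lt_agree lam Hlam) in Hy.
  specialize (H y x (S N) (agree_sym _ _ _ Hy)). specialize (HN (S N) (le_S _ _ (le_n N))).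
  lra.
Qed.

Lemma continuous_S_depends_on f L : depends_on f L -> continuous_S lam f.
Proof.
  intros H x eps He. exists (lam ^ L). split; [apply pow_lt; lra |].
  intros y Hy. apply (dist_lt_agree lam Hlam) in Hy. rewrite (H x y).
  - rewrite Rminus_diag, Rabs_R0; lra.
  - apply agree_le with (S L); auto.
Qed.

Lemma continuous_S_const c : continuous_S lam (fun _ : Sigma d => c).
Proof. apply (continuous_S_depends_on _ 0). intros a b _. reflexivity. Qed.

Lemma continuous_S_plus f g : continuous_S lam f -> continuous_S lam g ->
  continuous_S lam (fun x => f x + g x).
Proof.
  intros Hf Hg x eps He.
  destruct (Hf x (eps / 2)) as [d1 [Hd1 H1]]; [lra |].
  destruct (Hg x (eps / 2)) as [d2 [Hd2 H2]]; [lra |].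
  exists (Rmin d1 d2). split; [apply Rmin_pos; auto |].
  intros y Hy. specialize (H1 y (Rlt_le_trans _ _ _ Hy (Rmin_l _ _))).
  specialize (H2 y (Rlt_le_trans _ _ _ Hy (Rmin_r _ _))).
  replace (f y + g y - (f x + g x)) with ((f y - f x) + (g y - g x)) by ring.
  eapply Rle_lt_trans; [apply Rabs_triang | lra].
Qed.

Lemma continuous_S_mult_depends_on f g L : continuous_S lam f -> depends_on g L ->
  continuous_S lam (fun x => f x * g x).
Proof.
  intros Hf Hg x eps He.
  pose proof (Rabs_pos (g x)).
  destruct (Hf x (eps / (Rabs (g x) + 1))) as [d1 [Hd1 H1]];
    [apply Rdiv_lt_0_compat; lra |].
  exists (Rmin d1 (lam ^ L)). split; [apply Rmin_pos; auto; apply pow_lt; lra |].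
  intros y Hy. specialize (H1 y (Rlt_le_trans _ _ _ Hy (Rmin_l _ _))).
  assert (Ha : agree x y L).
  { apply agree_le with (S L); auto. apply (dist_lt_agree lam Hlam).
    eapply Rlt_le_trans; [exact Hy | apply Rmin_r]. }
  rewrite <- (Hg x y Ha).
  replace (f y * g x - f x * g x) with (g x * (f y - f x)) by ring. rewrite Rabs_mult.
  pose proof (Rabs_pos (f y - f x)).
  apply Rmult_lt_compat_l with (r := Rabs (g x) + 1) in H1; [| lra].
  replace ((Rabs (g x) + 1) * (eps / (Rabs (g x) + 1))) with eps in H1 by (field; lra).
  nra.
Qed.

Lemma continuous_S_scal c f : continuous_S lam f -> continuous_S lam (fun x => c * f x).
Proof.
  intros Hf. assert (E : (fun x => c * f x) = (fun x => f x * (fun _ => c) x)).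
  { apply functional_extensionality; intro; ring. }
  rewrite E. apply (continuous_S_mult_depends_on _ _ 0); auto. intros a b _. reflexivity.
Qed.

Lemma continuous_S_minus f g : continuous_S lam f -> continuous_S lam g ->
  continuous_S lam (fun x => f x - g x).
Proof.
  intros Hf Hg. assert (E : (fun x => f x - g x) = (fun x => f x + (-1) * g x)).
  { apply functional_extensionality; intro; ring. }
  rewrite E. apply continuous_S_plus, continuous_S_scal; auto.
Qed.

Lemma continuous_S_shift f : continuous_S lam f -> continuous_S lam (fun x => f (shift x)).
Proof.
  intros Hf x eps He. destruct (Hf (shift x) eps He) as [d1 [Hd1 H1]].
  destruct (pow_lt_eventually lam Hlam d1 Hd1) as [N HN].
  exists (lam ^ S N). split; [apply pow_lt; lra |].
  intros y Hy. apply H1. apply (dist_lt_agree lam Hlam), agree_shift in Hy.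
  pose proof (dist_agree_le lam Hlam _ _ _ Hy). specialize (HN (S N) (le_S _ _ (le_n N))).
  lra.
Qed.

Lemma continuous_S_iterT f n : continuous_S lam f -> continuous_S lam (fun x => f (iterT n x)).
Proof.
  revert f; induction n as [| n IH]; intros f Hf; simpl; auto.
  apply (continuous_S_shift (fun x => f (iterT n x))), IH, Hf.
Qed.

(* Compactness of [Sigma d]: an unbounded [f] would blow up near a cluster point. *)
Lemma continuous_S_bounded f : continuous_S lam f -> exists K, forall x, Rabs (f x) <= K.
Proof.
  intros Hf. apply NNPP; intros Hn.
  assert (H : forall k : nat, exists x, INR k < Rabs (f x)).
  { intros k. apply NNPP; intros Hk. apply Hn. exists (INR k). intros x.
    apply Rnot_lt_le. intro. apply Hk; eauto. }
  destruct (choice _ H) as [s Hs].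
  destruct (exists_cluster_point s) as [y Hy].
  destruct (Hf y 1) as [dl [Hdl Hc]]; [lra |].
  destruct (pow_lt_eventually lam Hlam dl Hdl) as [N HN].
  destruct (INR_unbounded (Rabs (f y) + 1)) as [K HK].
  destruct (Hy (S N) K) as [k [Hk Hag]].
  specialize (HN N (le_n N)).
  pose proof (agree_dist_lt lam Hlam _ _ _ (agree_sym _ _ _ Hag)).
  specialize (Hc (s k) ltac:(lra)). specialize (Hs k).
  pose proof (le_INR _ _ Hk). pose proof (Rabs_triang_inv (f (s k)) (f y)). lra.
Qed.

Lemma continuous_S_abs_bound f : continuous_S lam f ->
  exists K, 0 <= K /\ forall x, Rabs (f x) <= K.
Proof.
  intros Hf. destruct (continuous_S_bounded f Hf) as [K HK].
  exists (Rabs K). split; [apply Rabs_pos |]. intros x. eapply Rle_trans; [apply HK | apply Rle_abs].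
Qed.

End Continuity.

Fixpoint birkhoff {d : nat} (r : Sigma d -> R) (z : Sigma d) (L : nat) : R :=
  match L with O => 0 | S L' => r z + birkhoff r (shift z) L' end.

Definition glue {d : nat} (p : Sigma d) (L : nat) (w : Sigma d) : Sigma d :=
  fun i => if Nat.ltb i L then p i else w (i - L)%nat.

Lemma iterT_glue {d : nat} (p : Sigma d) L w : iterT L (glue p L w) = w.
Proof.
  apply functional_extensionality; intro k. rewrite iterT_apply. unfold glue.
  destruct (Nat.ltb_spec (L + k) L); [lia |]. f_equal; lia.
Qed.

Lemma agree_glue {d : nat} (p : Sigma d) L w M :
  agree (iterT L p) w M -> agree (glue p L w) p (L + M).
Proof.
  intros H i Hi. unfold glue. destruct (Nat.ltb_spec i L); auto.
  rewrite <- H by lia. rewrite iterT_apply. f_equal; lia.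
Qed.

Section Birkhoff.
Context {d : nat}.
Variable r : Sigma d -> R.

Lemma birkhoff_add z L1 L2 :
  birkhoff r z (L1 + L2) = birkhoff r z L1 + birkhoff r (iterT L1 z) L2.
Proof. revert z; induction L1 as [| L1 IH]; intros z; simpl; [ring | rewrite IH; ring]. Qed.

Lemma birkhoff_Sr z L : birkhoff r z (S L) = birkhoff r z L + r (iterT L z).
Proof. replace (S L) with (L + 1)%nat by lia. rewrite birkhoff_add. simpl. ring. Qed.

Lemma birkhoff_zero z L : (forall i, (i < L)%nat -> r (iterT i z) = 0) -> birkhoff r z L = 0.
Proof.
  induction L as [| L IH]; intros H; [reflexivity |].
  rewrite birkhoff_Sr, IH, H; [ring | lia | intros i Hi; apply H; lia].
Qed.

Lemma birkhoff_agree_bound q K : 0 < q < 1 -> 0 <= K ->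
  (forall a b n, agree a b n -> Rabs (r a - r b) <= K * q ^ n) ->
  forall L z p M, agree z p (L + M) ->
  birkhoff r z L <= birkhoff r p L + K * q ^ M / (1 - q).
Proof.
  intros Hq HK Hb.
  assert (Hs : forall L z p M, agree z p (L + M) ->
     birkhoff r z L <= birkhoff r p L + K * q ^ M * (q * (1 - q ^ L) / (1 - q))).
  { induction L as [| L IH]; intros z p M H; simpl.
    - replace (1 - 1) with 0 by ring. unfold Rdiv. rewrite Rmult_0_r, Rmult_0_l, Rmult_0_r. lra.
    - specialize (IH (shift z) (shift p) M (agree_shift _ _ _ H)).
      specialize (Hb z p _ H). pose proof (Rle_abs (r z - r p)).
      rewrite pow_add in Hb. simpl in Hb.
      assert (E : K * q ^ M * (q * (1 - q * q ^ L) / (1 - q)) =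
                  K * (q * q ^ L * q ^ M) + K * q ^ M * (q * (1 - q ^ L) / (1 - q)))
        by (field; lra).
      rewrite E. lra. }
  intros L z p M H. specialize (Hs L z p M H).
  pose proof (pow_pos_le1 q Hq L). pose proof (pow_pos_le1 q Hq M).
  assert (X : q * (1 - q ^ L) / (1 - q) <= 1 / (1 - q)).
  { unfold Rdiv. apply Rmult_le_compat_r; [apply Rlt_le, Rinv_0_lt_compat; lra | nra]. }
  assert (0 <= K * q ^ M) by (apply Rmult_le_pos; lra).
  replace (K * q ^ M / (1 - q)) with (K * q ^ M * (1 / (1 - q))) by (field; lra).
  pose proof (Rmult_le_compat_l _ _ _ H2 X). lra.
Qed.

Hypothesis Hr : forall x, 0 <= r x.

Lemma birkhoff_nonneg z L : 0 <= birkhoff r z L.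
Proof. revert z; induction L as [| L IH]; intros z; simpl; [lra | pose proof (IH (shift z)); pose proof (Hr z); lra]. Qed.

Lemma birkhoff_le L1 L2 z : (L1 <= L2)%nat -> birkhoff r z L1 <= birkhoff r z L2.
Proof.
  intros H. replace L2 with (L1 + (L2 - L1))%nat by lia. rewrite birkhoff_add.
  pose proof (birkhoff_nonneg (iterT L1 z) (L2 - L1)). lra.
Qed.

End Birkhoff.

Definition Lim (u : nat -> R) : R := epsilon (inhabits 0) (fun l => Un_cv u l).

Lemma Lim_spec u l : Un_cv u l -> Lim u = l.
Proof. intros H. apply (UL_sequence u); [unfold Lim; apply epsilon_spec; eauto | exact H]. Qed.

Lemma Un_cv_const c : Un_cv (fun _ : nat => c) c.
Proof. intros eps He. exists 0%nat. intros n _. unfold Rdist. rewrite Rminus_diag, Rabs_R0. auto. Qed.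

Lemma Un_cv_S u l : Un_cv u l -> Un_cv (fun n => u (S n)) l.
Proof.
  intros H. assert (E : (fun n => u (S n)) = (fun n => u (n + 1)%nat)).
  { apply functional_extensionality; intro n. f_equal; lia. }
  rewrite E. apply CV_shift', H.
Qed.

Lemma Un_cv_null_dominated u v : (forall n, Rabs (u n) <= v n) -> Un_cv v 0 -> Un_cv u 0.
Proof.
  intros Huv Hv eps He. destruct (Hv eps He) as [N HN]. exists N. intros n Hn.
  specialize (HN n Hn). specialize (Huv n). unfold Rdist in *.
  rewrite Rminus_0_r in *. pose proof (Rle_abs (v n)). lra.
Qed.

Lemma Cauchy_crit_dominated u v K : 0 <= K -> Cauchy_crit v ->
  (forall m n, Rabs (u m - u n) <= K * Rabs (v m - v n)) -> Cauchy_crit u.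
Proof.
  intros HK Hv Huv eps He. destruct (Hv (eps / (K + 1))) as [N HN]; [apply Rdiv_lt_0_compat; lra |].
  exists N. intros m n Hm Hn. specialize (HN m n Hm Hn). specialize (Huv m n). unfold Rdist in *.
  apply Rmult_lt_compat_l with (r := K + 1) in HN; [| lra].
  replace ((K + 1) * (eps / (K + 1))) with eps in HN by (field; lra).
  pose proof (Rabs_pos (v m - v n)). nra.
Qed.

Section Measure.
Context {d : nat}.
Variables (lam : R) (mu : (Sigma d -> R) -> R).
Hypotheses (Hlam : 0 < lam < 1) (Hmu : prob_measure lam mu).
Implicit Types f g h : Sigma d -> R.

Lemma mu_add f g : continuous_S lam f -> continuous_S lam g ->
  mu (fun x => f x + g x) = mu f + mu g.
Proof. apply Hmu. Qed.

Lemma mu_scal c f : continuous_S lam f -> mu (fun x => c * f x) = c * mu f.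
Proof. apply Hmu. Qed.

Lemma mu_nonneg f : continuous_S lam f -> (forall x, 0 <= f x) -> 0 <= mu f.
Proof. apply Hmu. Qed.

Lemma mu_ext f g : (forall x, f x = g x) -> mu f = mu g.
Proof. intros H. f_equal. apply functional_extensionality; auto. Qed.

Lemma mu_const c : mu (fun _ => c) = c.
Proof.
  rewrite (mu_ext _ (fun x => c * (fun _ => 1) x)) by (intro; ring).
  rewrite mu_scal by apply continuous_S_const, Hlam.
  destruct Hmu as [_ [_ [_ H1]]]. rewrite H1. ring.
Qed.

Lemma mu_minus f g : continuous_S lam f -> continuous_S lam g ->
  mu (fun x => f x - g x) = mu f - mu g.
Proof.
  intros Hf Hg. rewrite (mu_ext _ (fun x => f x + (fun y => -1 * g y) x)) by (intro; ring).
  rewrite mu_add, mu_scal; auto; [ring | apply continuous_S_scal; auto].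
Qed.

Lemma mu_le f g : continuous_S lam f -> continuous_S lam g ->
  (forall x, f x <= g x) -> mu f <= mu g.
Proof.
  intros Hf Hg H.
  pose proof (mu_nonneg (fun x => g x - f x) (continuous_S_minus lam Hlam g f Hg Hf)).
  rewrite mu_minus in H0 by auto. assert (0 <= mu g - mu f) by (apply H0; intro x; specialize (H x); lra).
  lra.
Qed.

Lemma mu_mult_diff_bound f K e1 e2 : continuous_S lam f -> (forall x, Rabs (f x) <= K) ->
  continuous_S lam e1 -> continuous_S lam e2 ->
  continuous_S lam (fun x => f x * e1 x) -> continuous_S lam (fun x => f x * e2 x) ->
  (forall x, e1 x <= e2 x) ->
  Rabs (mu (fun x => f x * e2 x) - mu (fun x => f x * e1 x)) <= K * (mu e2 - mu e1).
Proof.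
  intros Hf HK D1 D2 C1 C2 Hle.
  assert (CK : forall e : Sigma d -> R, continuous_S lam e -> continuous_S lam (fun x => K * e x))
    by (intros; apply continuous_S_scal; auto).
  assert (EK : mu (fun x => K * e2 x - K * e1 x) = K * (mu e2 - mu e1)).
  { rewrite mu_minus, !mu_scal by auto. ring. }
  rewrite <- mu_minus, <- EK by auto.
  assert (Hb : forall x, Rabs (f x * e2 x - f x * e1 x) <= K * e2 x - K * e1 x).
  { intros x. replace (f x * e2 x - f x * e1 x) with (f x * (e2 x - e1 x)) by ring.
    rewrite Rabs_mult, (Rabs_pos_eq (e2 x - e1 x)) by (specialize (Hle x); lra).
    specialize (HK x). specialize (Hle x). pose proof (Rabs_pos (f x)). nra. }
  apply Rabs_le. split.
  - replace (- mu (fun x => K * e2 x - K * e1 x)) with (-1 * mu (fun x => K * e2 x - K * e1 x)) by ring.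
    rewrite <- mu_scal by (apply continuous_S_minus; auto).
    apply mu_le; [apply continuous_S_scal, continuous_S_minus | apply continuous_S_minus |]; auto.
    intros x. specialize (Hb x). unfold Rabs in Hb; destruct Rcase_abs in Hb; lra.
  - apply mu_le; [apply continuous_S_minus | apply continuous_S_minus |]; auto.
    intros x. specialize (Hb x). unfold Rabs in Hb; destruct Rcase_abs in Hb; lra.
Qed.

Lemma exists_small_on_positive_set e h eps :
  continuous_S lam e -> continuous_S lam h ->
  (forall w, e w = 0 \/ e w = 1) -> (forall w, 0 <= h w) ->
  mu h = 0 -> 0 < mu e -> 0 < eps -> exists u, e u = 1 /\ h u < eps.
Proof.
  intros He Hh H01 Hh0 Hmuh Hmue Heps. apply NNPP; intro Hn.
  assert (Hle : forall w, eps * e w <= h w).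
  { intros w. destruct (H01 w) as [E | E]; rewrite E; [rewrite Rmult_0_r; auto |].
    apply Rnot_lt_le. intro. apply Hn. exists w. split; auto. lra. }
  pose proof (mu_le (fun w => eps * e w) h (continuous_S_scal lam Hlam eps e He) Hh Hle).
  rewrite mu_scal in H by auto. nra.
Qed.

Hypothesis Hinv : invariant lam mu.

Lemma mu_iterT f n : continuous_S lam f -> mu (fun w => f (iterT n w)) = mu f.
Proof.
  revert f; induction n as [| n IH]; intros f Hf; simpl; [reflexivity |].
  rewrite (Hinv (fun w => f (iterT n w))); auto. apply continuous_S_iterT; auto.
Qed.

End Measure.

Definition cylinder_ind {d : nat} (y : Sigma d) (L : nat) (w : Sigma d) : R :=
  if excluded_middle_informative (agree w y L) then 1 else 0.

Lemma cylinder_ind_depends_on {d : nat} (y : Sigma d) L : depends_on (cylinder_ind y L) L.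
Proof.
  intros a b H. unfold cylinder_ind.
  destruct (excluded_middle_informative (agree a y L)) as [H1 | H1];
  destruct (excluded_middle_informative (agree b y L)) as [H2 | H2]; auto; exfalso.
  - exact (H2 (agree_trans _ _ _ _ (agree_sym _ _ _ H) H1)).
  - exact (H1 (agree_trans _ _ _ _ H H2)).
Qed.

Lemma ball_ind_cylinder {d : nat} lam (y : Sigma d) N : 0 < lam < 1 ->
  ball_ind lam y (lam ^ N) = cylinder_ind y (S N).
Proof.
  intros Hlam. apply functional_extensionality; intro w. unfold ball_ind, cylinder_ind.
  destruct (Rlt_dec (Defs.dist lam y w) (lam ^ N)) as [H | H];
  destruct (excluded_middle_informative (agree w y (S N))) as [H2 | H2]; auto; exfalso.
  - exact (H2 (agree_sym _ _ _ (dist_lt_agree lam Hlam _ _ _ H))).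
  - exact (H (agree_dist_lt lam Hlam _ _ _ (agree_sym _ _ _ H2))).
Qed.

(* The measure [mu] restricted to the points whose orbit enters the cylinder of
   length [Lc] around [y'] within [N] steps, in the limit [N -> oo]: an invariant
   measure dominated by [mu], with total mass [Lim visit_mass]. *)
Section Restriction.
Context {d : nat}.
Variables (lam : R) (mu : (Sigma d -> R) -> R) (y' : Sigma d) (Lc : nat).
Hypotheses (Hlam : 0 < lam < 1) (Hmu : prob_measure lam mu) (Hinv : invariant lam mu).
Implicit Types f g : Sigma d -> R.

Definition visits (N : nat) (w : Sigma d) : Prop :=
  exists n, (1 <= n <= N)%nat /\ agree (iterT n w) y' Lc.

Definition visit_ind (N : nat) (w : Sigma d) : R :=
  if excluded_middle_informative (visits N w) then 1 else 0.

Lemma visit_ind_01 N w : visit_ind N w = 0 \/ visit_ind N w = 1.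
Proof. unfold visit_ind. destruct excluded_middle_informative; auto. Qed.

Lemma visit_ind_depends_on N : depends_on (visit_ind N) (N + Lc).
Proof.
  assert (H : forall a b, agree a b (N + Lc) -> visits N a -> visits N b).
  { intros a b Hab [n [Hn Ha]]. exists n. split; auto. intros i Hi. rewrite <- Ha by auto.
    rewrite !iterT_apply. symmetry. apply Hab. lia. }
  intros a b Hab. unfold visit_ind.
  destruct (excluded_middle_informative (visits N a)) as [H1 | H1];
  destruct (excluded_middle_informative (visits N b)) as [H2 | H2]; auto; exfalso.
  - exact (H2 (H a b Hab H1)).
  - exact (H1 (H b a (agree_sym _ _ _ Hab) H2)).
Qed.

Lemma visit_ind_continuous N : continuous_S lam (visit_ind N).
Proof. exact (continuous_S_depends_on lam Hlam _ _ (visit_ind_depends_on N)). Qed.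

Lemma continuous_S_mult_visit_ind f N : continuous_S lam f ->
  continuous_S lam (fun w => f w * visit_ind N w).
Proof. intros Hf. exact (continuous_S_mult_depends_on lam Hlam _ _ _ Hf (visit_ind_depends_on N)). Qed.

Lemma visit_ind_le N N' w : (N <= N')%nat -> visit_ind N w <= visit_ind N' w.
Proof.
  intros H. unfold visit_ind.
  destruct (excluded_middle_informative (visits N w)) as [[n [Hn Ha]] | H1];
  destruct (excluded_middle_informative (visits N' w)) as [H2 | H2]; try lra.
  exfalso. apply H2. exists n. split; auto. lia.
Qed.

Lemma visit_ind_shift_le N w : visit_ind N (shift w) <= visit_ind (S N) w.
Proof.
  unfold visit_ind.
  destruct (excluded_middle_informative (visits N (shift w))) as [[n [Hn Ha]] | H1];
  destruct (excluded_middle_informative (visits (S N) w)) as [H2 | H2]; try lra.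
  exfalso. apply H2. exists (S n). split; [lia | exact Ha].
Qed.

Definition visit_mass (N : nat) : R := mu (visit_ind N).

Lemma visit_mass_growing : Un_growing visit_mass.
Proof.
  intros N. apply (mu_le lam mu Hlam Hmu); try apply visit_ind_continuous.
  intros w; apply visit_ind_le; lia.
Qed.

Lemma visit_mass_cv : exists c, Un_cv visit_mass c.
Proof.
  destruct (growing_cv visit_mass visit_mass_growing) as [c Hc]; [| now exists c].
  exists 1. intros x [N ->]. rewrite <- (mu_const lam mu Hlam Hmu 1).
  apply (mu_le lam mu Hlam Hmu); [apply visit_ind_continuous | apply continuous_S_const; auto |].
  intros w; destruct (visit_ind_01 N w) as [E | E]; rewrite E; lra.
Qed.

Lemma visit_mass_1 : visit_mass 1 = mu (cylinder_ind y' Lc).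
Proof.
  unfold visit_mass. rewrite <- (Hinv (cylinder_ind y' Lc))
    by exact (continuous_S_depends_on lam Hlam _ _ (cylinder_ind_depends_on y' Lc)).
  apply (mu_ext mu). intros w. unfold visit_ind, cylinder_ind, visits.
  destruct excluded_middle_informative as [[n [Hn Ha]] | H1];
  destruct excluded_middle_informative as [H2 | H2]; auto; exfalso.
  - apply H2. replace n with 1%nat in Ha by lia. exact Ha.
  - apply H1. exists 1%nat. split; [lia | exact H2].
Qed.

Definition restr_seq f (N : nat) : R := mu (fun w => f w * visit_ind N w).

Lemma restr_seq_diff_bound f K N N' : continuous_S lam f -> (forall x, Rabs (f x) <= K) ->
  (N <= N')%nat -> Rabs (restr_seq f N' - restr_seq f N) <= K * (visit_mass N' - visit_mass N).
Proof.
  intros Hf HK H. apply (mu_mult_diff_bound lam mu Hlam Hmu); auto;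
    try apply visit_ind_continuous; try apply continuous_S_mult_visit_ind; auto.
  intros x. apply visit_ind_le, H.
Qed.

Lemma restr_seq_cv f : continuous_S lam f -> exists l, Un_cv (restr_seq f) l.
Proof.
  intros Hf. destruct (continuous_S_abs_bound lam Hlam f Hf) as [K [HK0 HK]].
  destruct visit_mass_cv as [c Hc].
  assert (Hcauchy : Cauchy_crit (restr_seq f)).
  { apply (Cauchy_crit_dominated _ visit_mass K HK0); [apply (CV_Cauchy _ (exist _ c Hc)) |].
    intros m n. destruct (Nat.le_ge_cases n m) as [Hnm | Hmn].
    - pose proof (restr_seq_diff_bound f K n m Hf HK Hnm).
      pose proof (Rle_abs (visit_mass m - visit_mass n)). nra.
    - pose proof (restr_seq_diff_bound f K m n Hf HK Hmn).
      rewrite Rabs_minus_sym, (Rabs_minus_sym (visit_mass m)).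
      pose proof (Rle_abs (visit_mass n - visit_mass m)). nra. }
  destruct (R_complete _ Hcauchy) as [l Hl]. now exists l.
Qed.

Definition restricted f : R := Lim (restr_seq f).

Lemma restricted_cv f : continuous_S lam f -> Un_cv (restr_seq f) (restricted f).
Proof.
  intros Hf. destruct (restr_seq_cv f Hf) as [l Hl]. unfold restricted. now rewrite (Lim_spec _ l Hl).
Qed.

Lemma restricted_add f g : continuous_S lam f -> continuous_S lam g ->
  restricted (fun x => f x + g x) = restricted f + restricted g.
Proof.
  intros Hf Hg. apply Lim_spec.
  assert (E : restr_seq (fun x => f x + g x) = (fun N => restr_seq f N + restr_seq g N)).
  { apply functional_extensionality; intro N. unfold restr_seq.
    rewrite <- (mu_add lam mu Hmu) by (apply continuous_S_mult_visit_ind; auto).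
    apply (mu_ext mu). intros; ring. }
  rewrite E. apply CV_plus; apply restricted_cv; auto.
Qed.

Lemma restricted_scal c f : continuous_S lam f -> restricted (fun x => c * f x) = c * restricted f.
Proof.
  intros Hf. apply Lim_spec.
  assert (E : restr_seq (fun x => c * f x) = (fun N => c * restr_seq f N)).
  { apply functional_extensionality; intro N. unfold restr_seq.
    rewrite <- (mu_scal lam mu Hmu) by (apply continuous_S_mult_visit_ind; auto).
    apply (mu_ext mu). intros; ring. }
  rewrite E. apply CV_mult; [apply Un_cv_const | apply restricted_cv; auto].
Qed.

Lemma restricted_const_1 : Un_cv visit_mass (restricted (fun _ => 1)).
Proof.
  assert (E : restr_seq (fun _ => 1) = visit_mass).
  { apply functional_extensionality; intro N. apply (mu_ext mu). intros; ring. }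
  rewrite <- E. apply restricted_cv, continuous_S_const, Hlam.
Qed.

Lemma restricted_bounds f : continuous_S lam f -> (forall x, 0 <= f x) ->
  0 <= restricted f <= mu f.
Proof.
  intros Hf H.
  assert (Hterm : forall N, 0 <= restr_seq f N <= mu f).
  { intros N. unfold restr_seq.
    assert (Hb : forall x, 0 <= f x * visit_ind N x <= f x).
    { intros x. specialize (H x). destruct (visit_ind_01 N x) as [E | E]; rewrite E; lra. }
    split; [apply (mu_nonneg lam mu Hmu) | apply (mu_le lam mu Hlam Hmu)];
      try apply continuous_S_mult_visit_ind; auto; apply Hb. }
  split.
  - apply (@Rle_cv_lim (fun _ => 0) (restr_seq f)); [apply Hterm | apply Un_cv_const | apply restricted_cv; auto].
  - apply (@Rle_cv_lim (restr_seq f) (fun _ => mu f)); [apply Hterm | apply restricted_cv; auto | apply Un_cv_const].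
Qed.

(* The mass lost by shifting, [visit_mass (S N) - visit_mass N], tends to zero. *)
Lemma restricted_invariant f : continuous_S lam f -> restricted (fun x => f (shift x)) = restricted f.
Proof.
  intros Hf. destruct (continuous_S_abs_bound lam Hlam f Hf) as [K [HK0 HK]].
  assert (Hfs : continuous_S lam (fun x => f (shift x))) by (apply continuous_S_shift; auto).
  destruct visit_mass_cv as [c Hc].
  assert (Hstep : forall N, Rabs (restr_seq (fun x => f (shift x)) (S N) - restr_seq f N)
                           <= K * (visit_mass (S N) - visit_mass N)).
  { intros N. unfold restr_seq, visit_mass.
    rewrite <- (Hinv (fun w => f w * visit_ind N w)) by (apply continuous_S_mult_visit_ind; auto).
    rewrite <- (Hinv (visit_ind N)) by apply visit_ind_continuous.
    apply (mu_mult_diff_bound lam mu Hlam Hmu (fun x => f (shift x)) K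
             (fun w => visit_ind N (shift w)) (visit_ind (S N))); auto.
    - apply continuous_S_shift, visit_ind_continuous; auto.
    - apply visit_ind_continuous.
    - apply (continuous_S_shift lam Hlam (fun w => f w * visit_ind N w)).
      apply continuous_S_mult_visit_ind; auto.
    - apply continuous_S_mult_visit_ind; auto.
    - intros x. apply visit_ind_shift_le. }
  assert (Hnull : Un_cv (fun N => restr_seq (fun x => f (shift x)) (S N) - restr_seq f N) 0).
  { apply (Un_cv_null_dominated _ _ Hstep).
    replace 0 with (K * (c - c)) by ring.
    apply CV_mult; [apply Un_cv_const | apply CV_minus; [apply Un_cv_S |]; exact Hc]. }
  assert (Hlim : Un_cv (fun N => restr_seq (fun x => f (shift x)) (S N) - restr_seq f N)
                   (restricted (fun x => f (shift x)) - restricted f)).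
  { apply CV_minus; [apply Un_cv_S |]; apply restricted_cv; auto. }
  pose proof (UL_sequence _ _ _ Hlim Hnull). lra.
Qed.

End Restriction.

Section Dynamics.
Context {d : nat}.
Variables (lam alpha : R) (A F : Sigma d -> R).
Hypotheses (Hlam : 0 < lam < 1) (Halpha : 0 < alpha)
  (HAh : hoelder lam alpha A) (HF : calibrated lam alpha A F).

Let q := hoelder_ratio lam alpha.
Let Hq : 0 < q < 1 := hoelder_ratio_in01 lam alpha Hlam Halpha.
Let RF := R_F lam A F.

Lemma R_F_nonneg x : 0 <= RF x.
Proof.
  destruct HF as [_ Hc]. destruct (Hc (shift x)) as [H _]. specialize (H x eq_refl).
  unfold RF, R_F. lra.
Qed.

Lemma exists_preimage_R_F_zero w : exists v, shift v = w /\ RF v = 0.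
Proof.
  destruct HF as [_ Hc]. destruct (Hc w) as [_ [v [Hv1 Hv2]]].
  exists v. split; auto. unfold RF, R_F. rewrite Hv1. lra.
Qed.

Lemma F_agree_bound :
  exists K, 0 <= K /\ forall a b n, agree a b n -> Rabs (F a - F b) <= K * q ^ n.
Proof. apply hoelder_agree_bound; auto. apply HF. Qed.

Lemma R_F_agree_bound :
  exists K, 0 <= K /\ forall a b n, agree a b n -> Rabs (RF a - RF b) <= K * q ^ n.
Proof.
  destruct F_agree_bound as [KF [HKF HF1]].
  destruct (hoelder_agree_bound lam alpha Hlam Halpha A HAh) as [KA [HKA HA1]].
  assert (HKFq : KF <= KF / q).
  { unfold Rdiv. rewrite <- (Rmult_1_r KF) at 1. apply Rmult_le_compat_l; auto.
    rewrite <- Rinv_1. apply Rinv_le_contravar; lra. }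
  exists (KF / q + KF + KA). split; [lra |].
  intros a b n H.
  assert (Hshift : Rabs (F (shift a) - F (shift b)) <= KF / q * q ^ n).
  { destruct n as [| n].
    - specialize (HF1 (shift a) (shift b) 0%nat (agree0 _ _)). simpl in *. lra.
    - specialize (HF1 (shift a) (shift b) n (agree_shift _ _ _ H)).
      replace (KF / q * q ^ S n) with (KF * q ^ n) by (simpl; field; lra). auto. }
  specialize (HF1 a b n H). specialize (HA1 a b n H).
  unfold RF, R_F.
  replace (F (shift a) - F a - A a + mA lam A - (F (shift b) - F b - A b + mA lam A))
    with ((F (shift a) - F (shift b)) - (F a - F b) - (A a - A b)) by ring.
  fold q in HA1.
  set (u := F (shift a) - F (shift b)) in *. set (v := F a - F b) in *. set (w := A a - A b) in *.
  assert (Htri : Rabs (u - v - w) <= Rabs u + Rabs v + Rabs w).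
  { unfold Rminus. rewrite <- (Rabs_Ropp v), <- (Rabs_Ropp w).
    pose proof (Rabs_triang (u + - v) (- w)). pose proof (Rabs_triang u (- v)). lra. }
  lra.
Qed.

Lemma F_continuous : continuous_S lam F.
Proof. destruct F_agree_bound as [K [HK H]]. eapply continuous_S_of_agree_bound; eauto. Qed.

Lemma R_F_continuous : continuous_S lam RF.
Proof. destruct R_F_agree_bound as [K [HK H]]. eapply continuous_S_of_agree_bound; eauto. Qed.

Lemma birkhoff_R_F_continuous N : continuous_S lam (fun w => birkhoff RF w N).
Proof.
  induction N as [| N IH]; simpl; [apply continuous_S_const; auto |].
  apply continuous_S_plus; auto; [apply R_F_continuous | apply (continuous_S_shift lam Hlam _ IH)].
Qed.

Lemma sum_A_coboundary z k :
  sum_f_R0 (fun i => A (iterT i z) - mA lam A) k = F (iterT (S k) z) - F z - birkhoff RF z (S k).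
Proof.
  induction k as [| k IH]; [simpl; unfold RF, R_F; ring |].
  simpl sum_f_R0. rewrite IH, (birkhoff_Sr RF z (S k)).
  assert (E : RF (iterT (S k) z) =
              F (shift (iterT (S k) z)) - F (iterT (S k) z) - A (iterT (S k) z) + mA lam A)
    by reflexivity.
  rewrite E, (iterT_Sr (S k) z). change (iterT k (shift z)) with (iterT (S k) z). ring.
Qed.

Definition reach (a b : Sigma d) (M : nat) (eps : R) : Prop :=
  exists p L, (1 <= L)%nat /\ agree p a M /\ agree (iterT L p) b M /\ birkhoff RF p L <= eps.

Definition links (a b : Sigma d) : Prop := forall M eps, 0 < eps -> reach a b M eps.

Lemma reach_le a b M M' eps eps' :
  (M <= M')%nat -> eps' <= eps -> reach a b M' eps' -> reach a b M eps.
Proof.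
  intros H1 H2 [p [L [HL [Ha [Hb Hc]]]]]. exists p, L.
  repeat split; auto; [apply agree_le with M' .. | lra]; auto.
Qed.

Lemma reach_glue KR a b c M eps1 eps2 : 0 <= KR ->
  (forall u v n, agree u v n -> Rabs (RF u - RF v) <= KR * q ^ n) ->
  reach a b M eps1 -> reach b c M eps2 -> reach a c M (eps1 + eps2 + KR * q ^ M / (1 - q)).
Proof.
  intros HKR0 HKR [p1 [L1 [HL1 [Ha1 [Hb1 Hc1]]]]] [p2 [L2 [HL2 [Ha2 [Hb2 Hc2]]]]].
  assert (H1 : agree (iterT L1 p1) p2 M) by (eapply agree_trans; [exact Hb1 | apply agree_sym; auto]).
  pose proof (agree_glue p1 L1 p2 M H1) as H2.
  exists (glue p1 L1 p2), (L1 + L2)%nat. repeat split.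
  - lia.
  - eapply agree_trans; [| exact Ha1]. apply agree_le with (L1 + M)%nat; auto. lia.
  - rewrite Nat.add_comm, <- iterT_add, iterT_glue. auto.
  - rewrite birkhoff_add, iterT_glue.
    pose proof (birkhoff_agree_bound RF q KR Hq HKR0 HKR L1 _ _ M H2). lra.
Qed.

Lemma links_trans a b c : links a b -> links b c -> links a c.
Proof.
  intros Hab Hbc M eps Heps.
  destruct R_F_agree_bound as [KR [HKR0 HKR]].
  destruct (scaled_pow_lt_eventually q Hq (KR / (1 - q)) (eps / 3)) as [M0 HM0];
    [apply Rmult_le_pos; [lra | apply Rlt_le, Rinv_0_lt_compat; lra] | lra |].
  set (M' := Nat.max M M0).
  apply reach_le with M' (eps / 3 + eps / 3 + KR * q ^ M' / (1 - q)); [lia | |].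
  - specialize (HM0 M' ltac:(lia)). unfold Rdiv in *. lra.
  - apply (reach_glue KR a b c); auto; [apply Hab | apply Hbc]; lra.
Qed.

Lemma S_set_le_eventually y eta : 0 < eta ->
  exists M0, forall eps v, eps <= lam ^ M0 -> S_set lam A y y eps v -> v <= eta.
Proof.
  intros Heta. destruct F_agree_bound as [KF [HKF HF1]].
  destruct (scaled_pow_lt_eventually q Hq KF eta HKF Heta) as [M0 HM0].
  exists M0. intros eps v Heps [k [z [Hz [Hd ->]]]].
  rewrite sum_A_coboundary, Hz.
  assert (Hzy : agree z y (S M0)) by (apply (dist_lt_agree lam Hlam); lra).
  specialize (HF1 _ _ _ Hzy). specialize (HM0 (S M0) (le_S _ _ (le_n M0))).
  pose proof (birkhoff_nonneg RF R_F_nonneg z (S k)).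
  rewrite Rabs_minus_sym in HF1. pose proof (Rle_abs (F y - F z)). lra.
Qed.

(* A cheap approximate loop at [y], closed up by [glue], is an almost-periodic
   point near [y] whose ergodic sum is almost [0]. *)
Lemma S_set_gt_of_links y eta eps : links y y -> 0 < eta -> 0 < eps ->
  exists v, S_set lam A y y eps v /\ - eta < v.
Proof.
  intros Hy Heta Heps.
  destruct F_agree_bound as [KF [HKF HF1]]. destruct R_F_agree_bound as [KR [HKR0 HKR]].
  destruct (scaled_pow_lt_eventually q Hq KF (eta / 2) HKF) as [M0 HM0]; [lra |].
  destruct (scaled_pow_lt_eventually q Hq (KR / (1 - q)) (eta / 4)) as [M1 HM1];
    [apply Rmult_le_pos; [lra | apply Rlt_le, Rinv_0_lt_compat; lra] | lra |].
  destruct (pow_lt_eventually lam Hlam eps Heps) as [M2 HM2].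
  set (M := Nat.max M0 (Nat.max M1 (S M2))).
  destruct (Hy M (eta / 4)) as [p [L [HL [Ha [Hb Hc]]]]]; [lra |].
  pose proof (agree_glue p L y M Hb) as Hz.
  set (z := glue p L y) in *.
  assert (Hzy : agree z y M) by (eapply agree_trans; [apply agree_le with (L + M)%nat; [lia | exact Hz] | exact Ha]).
  exists (sum_f_R0 (fun i => A (iterT i z) - mA lam A) (L - 1)). split.
  - exists (L - 1)%nat, z. replace (S (L - 1)) with L by lia. repeat split.
    + apply iterT_glue.
    + pose proof (agree_dist_lt lam Hlam _ _ _ (agree_le _ _ (S M2) M ltac:(lia) Hzy)).
      specialize (HM2 M2 (le_n M2)). lra.
  - rewrite sum_A_coboundary. replace (S (L - 1)) with L by lia. unfold z; rewrite iterT_glue; fold z.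
    pose proof (birkhoff_agree_bound RF q KR Hq HKR0 HKR L _ _ M Hz).
    specialize (HF1 _ _ _ Hzy). specialize (HM0 M ltac:(lia)). specialize (HM1 M ltac:(lia)).
    pose proof (Rle_abs (F z - F y)). unfold Rdiv in *. lra.
Qed.

Lemma aubry_of_links_self y : links y y -> aubry lam A y.
Proof.
  intros Hy eta Heta. destruct (S_set_le_eventually y eta Heta) as [M0 HM0].
  exists (lam ^ M0). split; [apply pow_lt; lra |].
  intros eps [He1 He2]. split.
  - intros v Hv. rewrite Rplus_0_l. apply (HM0 eps); [lra | exact Hv].
  - rewrite Rminus_0_l. apply S_set_gt_of_links; auto.
Qed.

Definition zero_cost_path (a b : Sigma d) : Prop :=
  exists L, (1 <= L)%nat /\ iterT L a = b /\ birkhoff RF a L = 0.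

Lemma links_of_zero_cost_paths a b :
  (forall M, exists u v, zero_cost_path u v /\ agree u a M /\ agree v b M) -> links a b.
Proof.
  intros H M eps Heps. destruct (H M) as [u [v [[L [HL [Huv Hc]]] [Ha Hb]]]].
  exists u, L. repeat split; auto; [rewrite Huv; auto | lra].
Qed.

Lemma aubry_of_cluster_point s y :
  (forall k1 k2, (k1 < k2)%nat ->
     zero_cost_path (s k1) (s k2) \/ zero_cost_path (s k2) (s k1)) ->
  cluster_point s y -> aubry lam A y.
Proof.
  intros Hs Hy. apply aubry_of_links_self, links_of_zero_cost_paths. intros M.
  destruct (Hy M 0%nat) as [k1 [_ H1]]. destruct (Hy M (S k1)) as [k2 [Hk2 H2]].
  destruct (Hs k1 k2 ltac:(lia)) as [E | E]; [exists (s k1), (s k2) | exists (s k2), (s k1)]; auto.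
Qed.

Lemma zero_cost_path_iterT x k1 k2 : (k1 < k2)%nat ->
  (forall i, RF (iterT i x) = 0) -> zero_cost_path (iterT k1 x) (iterT k2 x).
Proof.
  intros Hk Hx. exists (k2 - k1)%nat. repeat split; [lia | rewrite iterT_add; f_equal; lia |].
  apply birkhoff_zero. intros i _. rewrite iterT_add. apply Hx.
Qed.

Lemma links_to_aubry_of_zero_cost_orbit x :
  (forall i, RF (iterT i x) = 0) -> exists y, aubry lam A y /\ links x y.
Proof.
  intros Hx. destruct (exists_cluster_point (fun k => iterT k x)) as [y Hy].
  exists y. split.
  - apply (aubry_of_cluster_point (fun k => iterT k x)); auto.
    intros k1 k2 Hk. left. apply zero_cost_path_iterT; auto.
  - apply links_of_zero_cost_paths. intros M. destruct (Hy M 1%nat) as [k [Hk Hag]].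
    exists x, (iterT k x). split; [apply (zero_cost_path_iterT x 0) | split]; auto; apply agree_refl.
Qed.

Lemma links_shift_of_R_F_zero x : RF x = 0 -> links x (shift x).
Proof.
  intros Hx. apply links_of_zero_cost_paths. intros M. exists x, (shift x).
  repeat split; [exists 1%nat; repeat split; simpl; [lia | rewrite Hx; ring] | apply agree_refl ..].
Qed.

(* Calibration gives a backward orbit along which [R_F] vanishes. *)
Lemma links_from_aubry x : exists y, aubry lam A y /\ links y x.
Proof.
  destruct (choice _ exists_preimage_R_F_zero) as [pre Hpre].
  set (P := fix P (n : nat) : Sigma d := match n with O => x | S n => pre (P n) end).
  assert (HP : forall j i, iterT j (P (i + j)%nat) = P i).
  { induction j as [| j IH]; intros i; [simpl; f_equal; lia |].
    replace (i + S j)%nat with (S (i + j)) by lia. simpl. rewrite (proj1 (Hpre _)). apply IH. }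
  assert (Hpath : forall k1 k2, (k1 < k2)%nat -> zero_cost_path (P k2) (P k1)).
  { intros k1 k2 Hk. exists (k2 - k1)%nat. repeat split; [lia | |].
    - pose proof (HP (k2 - k1)%nat k1) as E. replace (k1 + (k2 - k1))%nat with k2 in E by lia. exact E.
    - apply birkhoff_zero. intros i Hi. pose proof (HP i (k2 - i)%nat) as E.
      replace (k2 - i + i)%nat with k2 in E by lia. rewrite E.
      replace (k2 - i)%nat with (S (k2 - i - 1)) by lia. apply Hpre. }
  destruct (exists_cluster_point P) as [y Hy].
  exists y. split.
  - apply (aubry_of_cluster_point P); auto.
  - apply links_of_zero_cost_paths. intros M. destruct (Hy M 1%nat) as [k [Hk Hag]].
    exists (P k), x. split; [apply (Hpath 0%nat k) | split]; auto; apply agree_refl.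
Qed.

Definition linear_on_continuous (rho : (Sigma d -> R) -> R) : Prop :=
  (forall f g, continuous_S lam f -> continuous_S lam g ->
     rho (fun x => f x + g x) = rho f + rho g) /\
  (forall c f, continuous_S lam f -> rho (fun x => c * f x) = c * rho f).

Lemma linear_on_continuous_A rho : linear_on_continuous rho ->
  rho A = rho (fun x => F (shift x)) - rho F - rho RF + mA lam A * rho (fun _ => 1).
Proof.
  intros [Hadd Hscal].
  pose proof (continuous_S_shift lam Hlam F F_continuous) as C1.
  pose proof F_continuous as C2. pose proof R_F_continuous as C3.
  pose proof (continuous_S_const (d := d) lam Hlam 1) as C4.
  assert (E : A = fun x => (F (shift x) + -1 * F x) + (-1 * RF x + mA lam A * (fun _ => 1) x)).
  { apply functional_extensionality; intro x. unfold RF, R_F. ring. }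
  rewrite E at 1.
  rewrite Hadd, !Hadd, !Hscal; auto; try ring;
    apply continuous_S_plus || apply continuous_S_scal; auto; apply continuous_S_scal; auto.
Qed.

Section Transport.
Variable mu : (Sigma d -> R) -> R.
Hypotheses (Hmax : maximizing lam A mu)
  (Huniq : forall nu, maximizing lam A nu -> same_measure lam nu mu).

Let Hmu : prob_measure lam mu := proj1 (proj1 Hmax).
Let Hinv : invariant lam mu := proj2 (proj1 Hmax).

Lemma mu_R_F : mu RF = 0.
Proof.
  assert (Hlin : linear_on_continuous mu) by (split; [apply (mu_add lam mu Hmu) | apply (mu_scal lam mu Hmu)]).
  pose proof (linear_on_continuous_A mu Hlin) as E.
  rewrite (mu_const lam mu Hlam Hmu), (Hinv F F_continuous) in E.
  pose proof (proj2 Hmax) as HA. lra.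
Qed.

Lemma mu_birkhoff_R_F N : mu (fun w => birkhoff RF w N) = 0.
Proof.
  induction N as [| N IH]; [exact (mu_const lam mu Hlam Hmu 0) |].
  rewrite (mu_ext mu _ (fun w => birkhoff RF w N + RF (iterT N w))) by (intros; apply birkhoff_Sr).
  rewrite (mu_add lam mu Hmu), IH, (mu_iterT lam mu Hlam Hinv), mu_R_F;
    [ring | apply R_F_continuous | apply birkhoff_R_F_continuous | apply continuous_S_iterT, R_F_continuous; auto].
Qed.

Section Visits.
Variables (y' : Sigma d) (Lc : nat) (c : R).
Hypotheses (Hc : Un_cv (visit_mass mu y' Lc) c) (Hcpos : 0 < c).

Let restr := restricted mu y' Lc.

(* [restr / c] is again a maximizing measure, so by uniqueness it is [mu]. *)
Lemma restricted_eq_scaled f : continuous_S lam f -> restr f = c * mu f.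
Proof.
  intros Hf.
  assert (Hlin : linear_on_continuous restr).
  { split; [apply (restricted_add lam mu y' Lc Hlam Hmu) | apply (restricted_scal lam mu y' Lc Hlam Hmu)]. }
  assert (One : restr (fun _ => 1) = c).
  { apply (UL_sequence _ _ _ (restricted_const_1 lam mu y' Lc Hlam Hmu) Hc). }
  assert (HR : restr RF = 0).
  { pose proof (restricted_bounds lam mu y' Lc Hlam Hmu RF R_F_continuous R_F_nonneg).
    rewrite mu_R_F in H. unfold restr. lra. }
  assert (Hshift : forall g, continuous_S lam g -> restr (fun x => g (shift x)) = restr g)
    by (intros; apply (restricted_invariant lam mu y' Lc Hlam Hmu Hinv); auto).
  set (nu := fun g => restr g / c).
  assert (Hnu : maximizing lam A nu).
  { repeat split.
    - intros g h Hg Hh. unfold nu. rewrite (proj1 Hlin); auto. field. lra.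
    - intros a g Hg. unfold nu. rewrite (proj2 Hlin); auto. field. lra.
    - intros g Hg Hp. unfold nu, Rdiv. apply Rmult_le_pos; [| apply Rlt_le, Rinv_0_lt_compat; lra].
      apply (restricted_bounds lam mu y' Lc Hlam Hmu); auto.
    - unfold nu. rewrite One. field. lra.
    - intros g Hg. unfold nu. rewrite Hshift; auto.
    - unfold nu. rewrite (linear_on_continuous_A restr Hlin), Hshift, HR, One by apply F_continuous.
      field. lra. }
  specialize (Huniq nu Hnu f Hf). unfold nu in Huniq.
  apply (Rmult_eq_compat_l c) in Huniq. unfold Rdiv in Huniq.
  rewrite <- Huniq. field. lra.
Qed.

End Visits.

Lemma reach_of_restr_seq_pos y y' M eps N : 0 < eps ->
  0 < restr_seq mu y' (S M) (cylinder_ind y (S M)) N -> reach y y' M eps.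
Proof.
  intros Heps Hpos.
  set (e := fun w => cylinder_ind y (S M) w * visit_ind y' (S M) N w).
  assert (Ce : continuous_S lam e).
  { apply (continuous_S_depends_on lam Hlam _ (N + S M)), depends_on_mult;
      [apply depends_on_le with (S M); [lia | apply cylinder_ind_depends_on] | apply visit_ind_depends_on]. }
  assert (He01 : forall w, e w = 0 \/ e w = 1).
  { intros w. unfold e, cylinder_ind. destruct (visit_ind_01 y' (S M) N w) as [E | E]; rewrite E;
      destruct excluded_middle_informative; [left | left | right | left]; ring. }
  destruct (exists_small_on_positive_set lam mu Hlam Hmu e (fun w => birkhoff RF w N) eps Ce
              (birkhoff_R_F_continuous N) He01 (fun w => birkhoff_nonneg RF R_F_nonneg w N)
              (mu_birkhoff_R_F N) Hpos Heps) as [u [Hu1 Hu2]].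
  unfold e, cylinder_ind, visit_ind in Hu1.
  destruct (excluded_middle_informative (agree u y (S M))) as [Ha | Ha];
  destruct (excluded_middle_informative (visits y' (S M) N u)) as [[n [Hn Hag]] | Hw]; try lra.
  exists u, n. repeat split; [lia | apply agree_le with (S M); auto .. |].
  pose proof (birkhoff_le RF R_F_nonneg n N u ltac:(lia)). lra.
Qed.

(* Uniqueness of the maximizing measure forces the points that later visit a
   neighbourhood of [y'] to charge every neighbourhood of [y]; their orbits are
   cheap because [R_F] integrates to [0]. *)
Lemma links_of_in_supp y y' : in_supp lam mu y -> in_supp lam mu y' -> links y y'.
Proof.
  intros Hy Hy' M eps Heps.
  destruct (visit_mass_cv lam mu y' (S M) Hlam Hmu) as [c Hc].
  assert (Hcyl : forall z, in_supp lam mu z -> 0 < mu (cylinder_ind z (S M))).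
  { intros z Hz. rewrite <- (ball_ind_cylinder lam z M Hlam). apply Hz, pow_lt. lra. }
  assert (Hcpos : 0 < c).
  { pose proof (growing_ineq _ c (visit_mass_growing lam mu y' (S M) Hlam Hmu) Hc 1).
    rewrite (visit_mass_1 lam mu y' (S M) Hlam Hinv) in H. pose proof (Hcyl y' Hy'). lra. }
  assert (Hrestr : 0 < restricted mu y' (S M) (cylinder_ind y (S M))).
  { rewrite (restricted_eq_scaled y' (S M) c Hc Hcpos)
      by exact (continuous_S_depends_on lam Hlam _ _ (cylinder_ind_depends_on y (S M))).
    apply Rmult_lt_0_compat; auto. }
  destruct (classic (exists N, 0 < restr_seq mu y' (S M) (cylinder_ind y (S M)) N)) as [[N HN] | Hn].
  - exact (reach_of_restr_seq_pos y y' M eps N Heps HN).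
  - exfalso.
    assert (restricted mu y' (S M) (cylinder_ind y (S M)) <= 0).
    { apply (@Rle_cv_lim (restr_seq mu y' (S M) (cylinder_ind y (S M))) (fun _ => 0));
        [| | apply Un_cv_const].
      - intros N. apply Rnot_lt_le. intro. apply Hn. eauto.
      - apply (restricted_cv lam mu y' (S M) Hlam Hmu).
        exact (continuous_S_depends_on lam Hlam _ _ (cylinder_ind_depends_on y (S M))). }
    lra.
Qed.

Hypothesis Hsupp : forall x, aubry lam A x <-> in_supp lam mu x.

Lemma aubry_of_links_to_aubry x y : links x y -> aubry lam A y -> aubry lam A x.
Proof.
  intros Hxy Hy. destruct (links_from_aubry x) as [y' [Hy' Hy'x]].
  apply aubry_of_links_self, links_trans with y; auto.
  apply links_trans with y'; auto. apply links_of_in_supp; apply Hsupp; auto.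
Qed.

End Transport.

End Dynamics.

Lemma nonneg_partial_sums_nonpos_zero (u : nat -> R) :
  (forall i, 0 <= u i) -> (forall N, sum_f_R0 u N <= 0) -> forall i, u i = 0.
Proof.
  intros Hu Hs i. apply Rle_antisym; [| apply Hu].
  specialize (Hs i). destruct i as [| i]; [exact Hs |].
  simpl in Hs. pose proof (cond_pos_sum u i Hu). lra.
Qed.

Theorem mainTheorem17 (d : nat) (lam alpha : R) (Hlam : 0 < lam < 1) (Halpha : 0 < alpha)
  (A F : Sigma d -> R) (HA : in_R lam alpha A) (HF : calibrated lam alpha A F) :
  (forall x : Sigma d, ~ aubry lam A x -> I_F_pos lam A F x) /\
  (forall x : Sigma d, ~ aubry lam A x -> aubry lam A (shift x) -> 0 < R_F lam A F x).
Proof.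
  destruct HA as [HAh [mu [Hmax [Huniq Hsupp]]]].
  pose proof (aubry_of_links_to_aubry lam alpha A F Hlam Halpha HAh HF mu Hmax Huniq Hsupp) as Hback.
  split.
  - intros x Hx. apply NNPP; intro Hn. apply Hx.
    destruct (links_to_aubry_of_zero_cost_orbit lam alpha A F Hlam Halpha HAh HF x) as [y [Hy Hxy]].
    + apply nonneg_partial_sums_nonpos_zero; [intros i; apply (R_F_nonneg lam alpha A F HF) |].
      intros N. apply Rnot_lt_le. intro. apply Hn. now exists N.
    + exact (Hback x y Hxy Hy).
  - intros x Hx Hsx. apply Rnot_le_lt; intro Hle. apply Hx, (Hback x (shift x)); auto.
    apply links_shift_of_R_F_zero. pose proof (R_F_nonneg lam alpha A F HF x). lra.
Qed.
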